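(* Let $p,q\ge 1$ be integers, $C$ a finite set, and $M\in\mathcal M(p,q,C)$. If $\gamma\in C$ satisfies $\operatorname{frq}(\gamma)=\operatorname{frq}(M)$, then $\operatorname{exc}(M)=\operatorname{exc}(\gamma)$.
   Context: $\mathcal M(p,q,C)$ is the set of $p\times q$ matrices $M$ with entries from $C$ such that each row of $M$ has $q$ pairwise distinct entries, each column has $p$ pairwise distinct entries, and every pair $\{\alpha,\beta\}$ of distinct colours of $C$ is good: there is a row or a column of $M$ containing both $\alpha$ and $\beta$. The frequency $\operatorname{frq}(\gamma)$ of $\gamma\in C$ is the number of entries of $M$ equal to $\gamma$, and $\operatorname{frq}(M)$ is the minimum frequency over all colours of $C$. The excess of a colour $\gamma$ of frequency $l$ is $\operatorname{exc}(\gamma)=l(p+q-l-1)-(|C|-1)$, and the excess $\operatorname{exc}(M)$ of $M$ is the minimum of the excesses of colours in $C$. *)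

From HB Require Import structures.
From mathcomp Require Import all_boot all_order all_algebra.
Set Implicit Arguments. Unset Strict Implicit. Unset Printing Implicit Defensive.
Import Order.TTheory GRing.Theory Num.Theory.

(* Minimum of a (nonempty) sequence; value 0 on the empty sequence. *)
Definition seqmin_nat (s : seq nat) : nat :=
  if s is x :: s' then foldr minn x s' else 0%N.
Definition seqmin_int (s : seq int) : int :=
  if s is x :: s' then foldr Num.min x s' else 0%R.

Definition in_MM (C : finType) (p q : nat) (M : 'M[C]_(p, q)) : Prop :=
  [/\ (forall i : 'I_p, injective (fun j : 'I_q => M i j)),
      (forall j : 'I_q, injective (fun i : 'I_p => M i j)) &
      (forall a b : C, a <> b ->
         (exists i : 'I_p, (exists j, M i j = a) /\ (exists j, M i j = b)) \/
         (exists j : 'I_q, (exists i, M i j = a) /\ (exists i, M i j = b)))].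

Definition frq (C : finType) (p q : nat) (M : 'M[C]_(p, q)) (c : C) : nat :=
  #|[set ij : 'I_p * 'I_q | M ij.1 ij.2 == c]|.

Definition frqM (C : finType) (p q : nat) (M : 'M[C]_(p, q)) : nat :=
  seqmin_nat [seq frq M c | c <- enum C].

Definition exc (C : finType) (p q : nat) (M : 'M[C]_(p, q)) (c : C) : int :=
  let l := Posz (frq M c) in
  (l * (Posz p + Posz q - l - 1) - (Posz #|C| - 1))%R.

Definition excM (C : finType) (p q : nat) (M : 'M[C]_(p, q)) : int :=
  seqmin_int [seq exc M c | c <- enum C].

(* As a function of the frequency l, the excess l(p+q-l-1) - (|C|-1) is a
   concave parabola with axis l = (p+q-1)/2.  Distinct entries in rows and
   columns bound every frequency by min(p,q), so for frequencies m < l we get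
   m + l <= (q-1) + p, and the parabola is nondecreasing from m to l.  Hence
   excess is monotone in frequency, and a colour of least frequency has least
   excess. *)

From mathcomp Require Import all_boot all_order all_algebra.
From mathcomp Require Import zify.
Import Order.TTheory GRing.Theory Num.Theory.

Section FoldrMin.
Variables (d : Order.disp_t) (T : orderType d).

Lemma foldr_min_le (x : T) (s : seq T) y :
  y \in x :: s -> (foldr Order.min x s <= y)%O.
Proof.
elim: s y => [|z s IHs] y /=; first by rewrite inE => /eqP ->.
rewrite !inE ge_min => /or3P [/eqP -> | /eqP -> | y_s].
- by rewrite IHs ?mem_head ?orbT.
- by rewrite lexx.
- by rewrite IHs ?orbT // inE y_s orbT.
Qed.

Lemma foldr_min_mem (x : T) (s : seq T) : foldr Order.min x s \in x :: s.
Proof.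
elim: s => [|z s IHs] /=; first exact: mem_head.
rewrite !inE in IHs *; case: leP => _; first by rewrite eqxx orbT.
by case/orP: IHs => ->; rewrite ?orbT.
Qed.

End FoldrMin.

Lemma seqmin_nat_le (s : seq nat) x : x \in s -> (seqmin_nat s <= x)%N.
Proof. by case: s => [//|y s] /foldr_min_le; rewrite minEnat. Qed.

Lemma seqmin_intE (s : seq int) x :
  x \in s -> {in s, forall y, (x <= y)%R} -> seqmin_int s = x.
Proof.
case: s => [//|y s] x_s x_min /=; apply/eqP.
by rewrite eq_le foldr_min_le // x_min // foldr_min_mem.
Qed.

Section Frequency.
Variables (C : finType) (p q : nat) (M : 'M[C]_(p, q)).

Lemma frq_le_rows c : (forall i, injective (fun j => M i j)) -> (frq M c <= p)%N.
Proof.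
move=> row_inj; rewrite -[X in (_ <= X)%N](card_ord p); apply: (leq_card_in fst).
move=> [i j] [i' j'] /[!inE] /= /eqP Mij /eqP Mij' /= eq_ii'; subst i'.
by rewrite (row_inj i j j') // Mij Mij'.
Qed.

Lemma frq_le_cols c : (forall j, injective (fun i => M i j)) -> (frq M c <= q)%N.
Proof.
move=> col_inj; rewrite -[X in (_ <= X)%N](card_ord q); apply: (leq_card_in snd).
move=> [i j] [i' j'] /[!inE] /= /eqP Mij /eqP Mij' /= eq_jj'; subst j'.
by rewrite (col_inj j i i') // Mij Mij'.
Qed.

End Frequency.

Lemma excess_le (p q m l : nat) :
  (m <= l)%N -> (l <= p)%N -> (l <= q)%N ->
  (m%:Z * (p%:Z + q%:Z - m%:Z - 1) <= l%:Z * (p%:Z + q%:Z - l%:Z - 1))%R.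
Proof.
move=> le_ml le_lp le_lq; have [-> // | ne_ml] := eqVneq m l.
have sum_le : (m + l <= p + q - 1)%N by lia.
(* the difference of the two sides is (l - m) * (p + q - 1 - m - l) *)
nia.
Qed.

Lemma exc_le_frq (C : finType) (p q : nat) (M : 'M[C]_(p, q)) (a b : C) :
  in_MM M -> (frq M a <= frq M b)%N -> (exc M a <= exc M b)%R.
Proof.
case=> row_inj col_inj _ le_ab; rewrite /exc lerD2r.
by apply: excess_le; [| exact: frq_le_rows | exact: frq_le_cols].
Qed.

Theorem lemma2 (p q : nat) (C : finType) (M : 'M[C]_(p, q)) (gamma : C) :
  (1 <= p)%N -> (1 <= q)%N -> in_MM M ->
  frq M gamma = frqM M ->
  excM M = exc M gamma.
Proof.
move=> _ _ MM frq_gamma; apply: seqmin_intE; first by rewrite map_f ?mem_enum.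
move=> _ /mapP [c _ ->]; apply: exc_le_frq MM _.
by rewrite frq_gamma seqmin_nat_le // map_f ?mem_enum.
Qed.
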